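(* Let $G$ be a bipartite graph with bipartition $A\cup B$ such that every vertex $a\in A$ has degree exactly $2$. Then there exists a subset $X\subseteq B$ with $|X|\le\frac{|A|+|B|}{3}$ such that every vertex of $A$ has a neighbour in $X$. *)

(* A finite bipartite graph with bipartition A ∪ B is given by
   two finite vertex types A, B and an adjacency relation e : A -> B -> bool
   (edges only go between the two sides; simple graph, so the degree of a is
   the number of its neighbours). *)
From mathcomp Require Import all_boot.
Set Implicit Arguments. Unset Strict Implicit. Unset Printing Implicit Defensive.

Definition nbhd (A B : finType) (e : A -> B -> bool) (a : A) : {set B} :=
  [set b | e a b].

(* Cover greedily, one vertex b of B at a time, discarding b and the vertices of A it covers.
   If some b has at least two neighbours among the remaining vertices of A, taking it costs
   3 and removes at least 3 vertices.  Otherwise pick a remaining a with neighbours u <> v: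
   both are private to a, so taking u and discarding a, u and v again removes 3 vertices. *)
From mathcomp Require Import all_boot.
From mathcomp Require Import zify.

Set Implicit Arguments.
Unset Strict Implicit.
Unset Printing Implicit Defensive.

Section DegreeTwoCover.

Variables (A B : finType) (e : A -> B -> bool).

Definition covers (X : {set B}) (E : {set A}) :=
  forall a, a \in E -> exists2 b, b \in X & e a b.

Definition cheap_cover (E : {set A}) (S : {set B}) :=
  exists X : {set B}, 3 * #|X| <= #|E| + #|S| /\ covers X E.

Lemma covers_setU1 (b : B) (X : {set B}) (E : {set A}) :
  covers X [set a in E | ~~ e a b] -> covers (b |: X) E.
Proof.
move=> coverX a aE; have [eab | neab] := boolP (e a b).
  by exists b; rewrite ?setU11.
have /coverX[c cX eac] : a \in [set x in E | ~~ e x b] by rewrite inE aE neab.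
by exists c; rewrite ?setU1r.
Qed.

Lemma card_split_adj (E : {set A}) (b : B) :
  #|E| = #|[set a in E | e a b]| + #|[set a in E | ~~ e a b]|.
Proof.
rewrite -(cardsID [set a | e a b] E).
by congr (_ + _); apply: eq_card => a; rewrite !inE // andbC.
Qed.

Lemma cheap_cover_step (E : {set A}) (S T : {set B}) (b : B) :
  b \in T -> T \subset S -> 3 <= #|[set a in E | e a b]| + #|T| ->
  cheap_cover [set a in E | ~~ e a b] (S :\: T) -> cheap_cover E S.
Proof.
move=> bT sTS gain [X [sizeX coverX]]; exists (b |: X); split; last first.
  exact: covers_setU1.
have sizeS : #|S| = #|S :\: T| + #|T|.
  by rewrite -(cardsID T S) (setIidPr sTS) addnC.
have sizebX : #|b |: X| <= 1 + #|X| by rewrite cardsU1 leq_add2r leq_b1.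
rewrite (card_split_adj E b) sizeS; lia.
Qed.

Lemma cheap_cover_of_deg2 (E : {set A}) (S : {set B}) :
  {in E, forall a, 1 < #|nbhd e a|} -> {in E, forall a, nbhd e a \subset S} ->
  cheap_cover E S.
Proof.
elim: {E}#|E|.+1 {-2}E (ltnSn #|E|) S => // n IH E sizeE S deg2 nbhdS.
have [-> | [a aE]] := set_0Vmem E.
  by exists set0; split=> [|a]; rewrite ?cards0 ?inE.
have [u [v [+ + uv]]] := card_gt1P (deg2 a aE); rewrite !inE => eau eav.
have inS w : e a w -> w \in S by move=> eaw; apply: (subsetP (nbhdS a aE)); rewrite inE.
have recurse b (T : {set B}) : e a b -> b \in T -> T \subset S ->
    3 <= #|[set x in E | e x b]| + #|T| ->
    {in [set x in E | ~~ e x b], forall x, nbhd e x \subset S :\: T} ->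
    cheap_cover E S.
  move=> eab bT sTS gain nbhdST; apply: (cheap_cover_step bT sTS gain).
  apply: IH nbhdST => [|x]; last by rewrite inE => /andP[/deg2].
  have ltE : [set x in E | ~~ e x b] \proper E.
    apply/properP; split; first by apply/subsetP => x; rewrite inE => /andP[].
    by exists a; rewrite // inE eab andbF.
  by apply: leq_trans (proper_card ltE) _; rewrite -ltnS.
have shared w : e a w -> 1 < #|[set x in E | e x w]| -> cheap_cover E S.
  move=> eaw gain; apply: (recurse w [set w]); rewrite ?set11 ?sub1set ?cards1 ?inS //.
    by rewrite addn1.
  move=> x; rewrite inE => /andP[xE nexw]; apply/subsetP => y yx.
  rewrite !inE (subsetP (nbhdS x xE)) // andbT.
  by apply: contraNneq nexw => <-; rewrite inE in yx.
have [/(shared u eau) // | privu] := ltnP 1 #|[set x in E | e x u]|.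
have [/(shared v eav) // | privv] := ltnP 1 #|[set x in E | e x v]|.
apply: (recurse u [set u; v]); rewrite ?set21 ?subUset ?sub1set ?inS //.
  by rewrite cards2 uv addn2 !ltnS; apply/card_gt0P; exists a; rewrite inE aE eau.
move=> x; rewrite inE => /andP[xE nexu]; apply/subsetP => y; rewrite inE => exy.
rewrite !inE (subsetP (nbhdS x xE)) ?inE // andbT negb_or.
apply/andP; split; first by apply: contraNneq nexu => <-.
apply/eqP => yv; move: exy; rewrite yv => exv.
have xa : x = a by apply: (card_le1_eqP privv); rewrite inE ?xE ?aE.
by move: nexu; rewrite xa eau.
Qed.

End DegreeTwoCover.

Theorem lemma3 (A B : finType) (e : A -> B -> bool)
  (hdeg : forall a : A, #|nbhd e a| = 2) :
  exists X : {set B},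
    3 * #|X| <= #|A| + #|B| /\ (forall a : A, exists2 b, b \in X & e a b).
Proof.
have [|a _|X [sizeX coverX]] := @cheap_cover_of_deg2 A B e [set: A] [set: B].
- by move=> a _; rewrite hdeg.
- exact: subsetT.
exists X; split; first by rewrite !cardsT in sizeX.
by move=> a; apply: coverX; rewrite inE.
Qed.
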